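(* For integers $K\ge 3$ and $1\le\ell\le K$, let $M(K,\ell)$ be the number of primitive cyclic compositions of $K$ into $\ell$ positive parts, and define $R(K)=2^{-K}\sum_{K/\log_2 3<\ell\le K} M(K,\ell)\bigl(\log_2 3-K/\ell\bigr)$. Then for each $K\ge 3$, $$R(K)\le(\log_2 3-1)\,\Pr\!\Bigl[\mathrm{Bin}(K-1,\tfrac12)\ge\lceil K/\log_2 3\rceil-1\Bigr].$$
   Context: A primitive cyclic composition of $K$ into $\ell$ parts is a rotation class of compositions $(k_1,\ldots,k_\ell)$ of $K$ into positive integers that is not fixed by any nontrivial cyclic rotation. $\mathrm{Bin}(K-1,1/2)$ is a binomial random variable. *)

From HB Require Import structures.
From mathcomp Require Import all_boot all_order all_algebra.
From mathcomp Require Import reals exp.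
Set Implicit Arguments. Unset Strict Implicit. Unset Printing Implicit Defensive.
Import Order.TTheory GRing.Theory Num.Theory.

Definition is_comp (K l : nat) (s : seq nat) : bool :=
  [&& size s == l, all (fun x => 0 < x) s & sumn s == K].

(* all compositions of K into l parts (every part is <= K) *)
Definition comps (K l : nat) : seq (seq nat) :=
  undup [seq s <- [seq map (@nat_of_ord K.+1) (tval t) | t <- enum {: l.-tuple 'I_K.+1}]
        | is_comp K l s].

Definition primitive (s : seq nat) : bool :=
  all (fun i => rot i s != s) (iota 1 (size s).-1).

Definition roteq (s t : seq nat) : bool :=
  has (fun i => rot i s == t) (iota 0 (size s)).

Definition prim_comps (K l : nat) : seq (seq nat) :=
  [seq s <- comps K l | primitive s].

(* M(K,l): number of rotation classes of primitive compositions of K into l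
   parts; a class is represented by the sublist of prim_comps K l it forms. *)
Definition M (K l : nat) : nat :=
  size (undup [seq [seq t <- prim_comps K l | roteq s t] | s <- prim_comps K l]).

Local Open Scope ring_scope.

Definition log2_3 {R : realType} : R := ln 3 / ln 2.

Definition RK {R : realType} (K : nat) : R :=
  2 ^- K * \sum_(1 <= l < K.+1 | K%:R / log2_3 < l%:R :> R)
             (M K l)%:R * (log2_3 - K%:R / l%:R).

Definition binom_tail_half {R : realType} (n : nat) (m : int) : R :=
  \sum_(j < n.+1 | m <= j%:Z) ('C(n, j))%:R / 2 ^+ n.

(* Primitive compositions are compositions, and a composition of [K] into [l]
   parts either starts with 1 (drop it) or with a larger part (decrement it);
   Pascal's rule then bounds the number of compositions of [K] into [l] parts
   by [C(K-1, l-1)], hence [M(K,l) <= C(K-1, l-1)].  For [K/log2 3 < l <= K] the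
   weight [log2 3 - K/l] lies in [[0, log2 3 - 1]] and [l - 1] is at least
   [ceil(K/log2 3) - 1], so each term of [R(K)] is bounded by the matching term
   [(log2 3 - 1) C(K-1, l-1) / 2^(K-1)] of the binomial tail. *)

From HB Require Import structures.
From mathcomp Require Import all_boot all_order all_algebra.
From mathcomp Require Import reals exp zify.
Set Implicit Arguments. Unset Strict Implicit. Unset Printing Implicit Defensive.
Import Order.TTheory GRing.Theory Num.Theory.

Lemma is_comp1 n s : is_comp n 1 s -> s = [:: n].
Proof. by case: s => [|a [|b s]] // /and3P[_ _ /eqP /= <-]; rewrite addn0. Qed.

Lemma is_comp_cons1 n l t : is_comp n.+1 l.+1 (1 :: t) = is_comp n l t.
Proof. by rewrite /is_comp /= add1n !eqSS. Qed.

Lemma is_comp_consS n l a t : is_comp n.+1 l (a.+2 :: t) = is_comp n l (a.+1 :: t).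
Proof. by rewrite /is_comp /= !addSn eqSS. Qed.

Lemma uniq_comps1_size n S : uniq S -> all (is_comp n 1) S -> (size S <= 1)%N.
Proof.
move=> uS /allP cS; apply: (uniq_leq_size (s2 := [:: [:: n]])) => // s /cS /is_comp1 ->.
exact: mem_head.
Qed.

Lemma uniq_comps_size K l S :
  uniq S -> all (is_comp K.+1 l.+1) S -> (size S <= 'C(K, l))%N.
Proof.
elim: K l S => [|K IH] [|l] S uS cS.
- by rewrite bin0 (uniq_comps1_size uS cS).
- case: S cS {uS} => [|s S] //= /andP[+ _].
  by case: s => [|a [|b t]] // /and3P[_ /= /and3P[a0 b0 _] /eqP]; lia.
- by rewrite bin0 (uniq_comps1_size uS cS).
move/allP: cS => cS.
pose one_head s := head 0%N s == 1%N.
rewrite binS -(count_predC one_head S) addnC leq_add //.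
  have -> : count (predC one_head) S
      = size [seq (head 0 s).-1 :: behead s | s <- S & ~~ one_head s]%N.
    by rewrite size_map size_filter.
  apply: IH.
    rewrite map_inj_in_uniq ?filter_uniq // => s t.
    rewrite !mem_filter => /andP[_ /cS] + /andP[_ /cS].
    case: s => [|a s] //; case: t => [|b t] // /and3P[_ /andP[a0 _] _].
    by case/and3P=> _ /andP[b0 _] _ /= [ab ->]; congr (_ :: _); lia.
  apply/allP => _ /mapP[s + ->]; rewrite mem_filter => /andP[+ /cS].
  by case: s => [|[|[|a]] t] //; rewrite is_comp_consS.
have -> : count one_head S = size [seq behead s | s <- S & one_head s].
  by rewrite size_map size_filter.
apply: IH.
  rewrite map_inj_in_uniq ?filter_uniq // => s t.
  rewrite !mem_filter => /andP[+ _] /andP[+ _].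
  by case: s => [|a s] //; case: t => [|b t] // /eqP /= -> /eqP /= -> /= ->.
apply/allP => _ /mapP[s + ->]; rewrite mem_filter => /andP[+ /cS].
by case: s => [|a t] // /eqP /= ->; rewrite is_comp_cons1.
Qed.

Lemma M_le_bin K l : (M K.+1 l.+1 <= 'C(K, l))%N.
Proof.
rewrite /M; apply: leq_trans (size_undup _) _; rewrite size_map size_filter.
apply: leq_trans (count_size _ _) _; apply: uniq_comps_size; first exact: undup_uniq.
by apply/allP => s; rewrite mem_undup mem_filter => /andP[].
Qed.

Local Open Scope ring_scope.

Lemma ceil_subr1_le (R : archiRealFieldType) (x : R) (j : nat) :
  x < j.+1%:R -> Num.ceil x - 1 <= j%:Z.
Proof.
move=> /ltW hx; rewrite lerBlDr.
have : Num.ceil x <= j.+1%:Z by rewrite ceil_le_int.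
by rewrite -addn1 PoszD.
Qed.

Lemma weighted_term_le (R : realFieldType) (L : R) (k j a c : nat) :
  1 <= L -> (j <= k)%N -> k.+1%:R / L < j.+1%:R -> (a <= c)%N ->
  2 ^- k.+1 * (a%:R * (L - k.+1%:R / j.+1%:R)) <= (L - 1) * (c%:R / 2 ^+ k).
Proof.
move=> L_ge1 jk kLj ac.
have L_gt0 : 0 < L by apply: lt_le_trans L_ge1.
have j_gt0 : 0 < j.+1%:R :> R by rewrite ltr0n.
have gap_ge0 : 0 <= L - k.+1%:R / j.+1%:R.
  rewrite ltr_pdivrMr // in kLj.
  by rewrite subr_ge0 ler_pdivrMr // mulrC ltW.
have gap_le : L - k.+1%:R / j.+1%:R <= L - 1.
  by rewrite lerD2l lerN2 ler_pdivlMr // mul1r ler_nat.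
rewrite mulrC mulrA [(L - 1) * _]mulrC.
apply: ler_pM; rewrite ?mulr_ge0 ?ler0n ?invr_ge0 ?exprn_ge0 //.
  by apply: ler_pM; rewrite ?ler0n ?ler_nat.
by rewrite exprS invfM ler_piMl ?invr_ge0 ?exprn_ge0 // invf_le1 ?ler1n.
Qed.

Lemma weighted_tail_le (R : archiRealFieldType) (L : R) (k : nat) (m : nat -> nat) :
  1 <= L -> (forall j, (m j.+1 <= 'C(k, j))%N) ->
  2 ^- k.+1 * \sum_(1 <= l < k.+2 | k.+1%:R / L < l%:R) (m l)%:R * (L - k.+1%:R / l%:R)
  <= (L - 1) * \sum_(j < k.+1 | Num.ceil (k.+1%:R / L) - 1 <= j%:Z) 'C(k, j)%:R / 2 ^+ k.
Proof.
move=> L_ge1 m_le.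
rewrite big_add1 /= big_mkord !mulr_sumr big_mkcond [leRHS]big_mkcond /=.
apply: ler_sum => j _; case: ifP => [kLj | _].
  by rewrite ceil_subr1_le // weighted_term_le // -ltnS.
case: ifP => _ //.
by rewrite mulr_ge0 ?divr_ge0 ?ler0n ?exprn_ge0 ?subr_ge0.
Qed.

Lemma log2_3_ge1 (R : realType) : 1 <= log2_3 (R := R).
Proof.
have ln2_gt0 : 0 < ln (2 : R) by apply: ln_gt0; rewrite ltr1n.
by rewrite /log2_3 ler_pdivlMr // mul1r ler_ln ?posrE ?ltr0n // ler_nat.
Qed.

Theorem mainTheorem10 (R : realType) (K : nat) (hK : (3 <= K)%N) :
  RK (R := R) K <=
  (log2_3 - 1) * binom_tail_half (R := R) K.-1 (Num.ceil (K%:R / log2_3 : R) - 1).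
Proof.
case: K hK => // k _.
rewrite /RK /binom_tail_half /=.
apply: weighted_tail_le; first exact: log2_3_ge1.
exact: M_le_bin.
Qed.
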